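(* Let $K$ be a linearly ordered set and let $\{(\mathcal{A}_{k,\ell},\mathcal{A}_{k,r})\}_{k\in K}$ be pairs of subalgebras of a non-commutative space $(\mathcal{A},\varphi)$ which are bi-monotonically independent with respect to $\varphi$. Then: (i) the family $\{\mathcal{A}_{k,\ell}\}_{k\in K}$ is monotonically independent with respect to $\varphi$; (ii) the family $\{\mathcal{A}_{k,r}\}_{k\in K}$ is monotonically independent with respect to $\varphi$ (for the same order on $K$); (iii) if $j\ne k$, then $\mathcal{A}_{k,\ell}$ and $\mathcal{A}_{j,r}$ are classically independent, in the sense that for any $x_1,\dots,x_n\in\mathcal{A}_{k,\ell}\cup\mathcal{A}_{j,r}$, with $L=\{i: x_i\in\mathcal{A}_{k,\ell}\}$ and $R=\{1,\dots,n\}\setminus L$ (each $x_i$ assigned to one of the two algebras), one has $\varphi(x_1\cdots x_n)=\varphi(x_L)\varphi(x_R)$.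
   Context: A family of subalgebras $\{\mathcal{C}_k\}_{k\in K}$ ($K$ linearly ordered) of $(\mathcal{A},\varphi)$ is monotonically independent if $\varphi(c_1\cdots c_{p-1}c_pc_{p+1}\cdots c_n)=\varphi(c_p)\varphi(c_1\cdots c_{p-1}c_{p+1}\cdots c_n)$ whenever $c_j\in\mathcal{C}_{k_j}$ and $k_{p-1}<k_p>k_{p+1}$ (one inequality eliminated if $p=1$ or $p=n$). A non-commutative space $(\mathcal{A},\varphi)$ is a complex algebra with a linear functional, with $\varphi(1)=1$ if $\mathcal{A}$ is unital. For algebras $\mathcal{C}_k$, $\sqcup_k\mathcal{C}_k$ denotes the free product without identification of units, $*_k\mathcal{C}_k$ the free product of unital algebras with identification of units, and $\widetilde{\mathcal{C}}=\mathbb{C}1\oplus\mathcal{C}$ the unitization; $\widetilde{\mathcal{C}_1}*\widetilde{\mathcal{C}_2}\cong\widetilde{\mathcal{C}_1\sqcup\mathcal{C}_2}$. Notation. For $n\ge1$ and $\chi:\{1,\dots,n\}\to\{\ell,r\}$ with $\chi^{-1}(\{\ell\})=\{i_1<\dots<i_p\}$ and $\chi^{-1}(\{r\})=\{i_{p+1}>\dots>i_n\}$, let $\prec_\chi$ be the total order $i_1\prec_\chi\cdots\prec_\chi i_n$. A $\chi$-interval is an interval for $\prec_\chi$. For $V=\{v_1<\dots<v_s\}$ write $x_V=x_{v_1}\cdots x_{v_s}$; a functional applied to the empty product equals $1$. For $\omega:\{1,\dots,n\}\to K$, $\pi_{\chi,\omega}$ is the unique partition of $\{1,\dots,n\}$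 into blocks $V_1,\dots,V_m$ such that each $V_k$ is a $\chi$-interval, $\max_{\prec_\chi}V_k\prec_\chi\min_{\prec_\chi}V_{k+1}$, $\omega$ is constant on each $V_k$, and $\omega(V_k)\ne\omega(V_{k+1})$. c-bi-free product. Given pairs of unital algebras $(\mathcal{B}_{k,\ell},\mathcal{B}_{k,r})_{k\in K}$ and unital linear functionals $\varphi_k,\psi_k$ on $\mathcal{B}_{k,\ell}*\mathcal{B}_{k,r}$, their c-bi-free product $(\varphi,\psi)$ is the unique pair of unital linear functionals on $*_k(\mathcal{B}_{k,\ell}*\mathcal{B}_{k,r})$ restricting to $\varphi_k,\psi_k$ and such that whenever $b_j\in\mathcal{B}_{\omega(j),\chi(j)}$ with $\psi(b_V)=0$ for all $V\in\pi_{\chi,\omega}$, then $\psi(b_1\cdots b_n)=0$ and $\varphi(b_1\cdots b_n)=\prod_{V\in\pi_{\chi,\omega}}\varphi(b_V)$. Bi-monotonic product. For pairs $(\mathcal{A}_{k,\ell},\mathcal{A}_{k,r})$, $k=1,2$, with linear functionals $\varphi_k$ on $\mathcal{A}_{k,\ell}\sqcup\mathcal{A}_{k,r}$: let $\widetilde{\varphi_k}$ be the unital extension to $\widetilde{\mathcal{A}_{k,\ell}\sqcup\mathcal{A}_{k,r}}$, $\delta_1$ the unital functional on $\widetilde{\mathcal{A}_{1,\ell}\sqcup\mathcal{A}_{1,r}}$ vanishing on $\mathcal{A}_{1,\ell}\sqcup\mathcal{A}_{1,r}$, and $(\widetilde\varphi,\widetilde\psi)$ the c-bi-free product of $(\widetilde{\varphi_1},\delta_1)$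 and $(\widetilde{\varphi_2},\widetilde{\varphi_2})$ for the pairs $(\widetilde{\mathcal{A}_{k,\ell}},\widetilde{\mathcal{A}_{k,r}})$. Then $\varphi_1\rhd\!\!\rhd\varphi_2$ is the restriction of $\widetilde\varphi$ to $(\mathcal{A}_{1,\ell}\sqcup\mathcal{A}_{1,r})\sqcup(\mathcal{A}_{2,\ell}\sqcup\mathcal{A}_{2,r})$, regarded as a functional for the pair $(\mathcal{A}_{1,\ell}\sqcup\mathcal{A}_{2,\ell},\mathcal{A}_{1,r}\sqcup\mathcal{A}_{2,r})$. This product is associative, so iterated products are well defined. Bi-monotonic independence. A family $\{(\mathcal{A}_{k,\ell},\mathcal{A}_{k,r})\}_{k\in K}$ of pairs of subalgebras of $(\mathcal{A},\varphi)$ is bi-monotonically independent if for every finite $k_1<\dots<k_p$ in $K$, $\varphi\circ\iota=\varphi_{k_1}\rhd\!\!\rhd\cdots\rhd\!\!\rhd\varphi_{k_p}$, where $\iota:\sqcup_{j}(\mathcal{A}_{k_j,\ell}\sqcup\mathcal{A}_{k_j,r})\to\mathcal{A}$ is induced by the inclusions and $\varphi_k=\varphi\circ\iota|_{\mathcal{A}_{k,\ell}\sqcup\mathcal{A}_{k,r}}$. *)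

From HB Require Import structures.
From mathcomp Require Import all_boot all_order all_algebra.
Set Implicit Arguments. Unset Strict Implicit. Unset Printing Implicit Defensive.
Import Order.TTheory GRing.Theory.
Local Open Scope ring_scope.

(* Sides: [true] = left (l), [false] = right (r). *)

Section NCSpace.
Variables (F : fieldType) (V : lmodType F) (mul : V -> V -> V) (phi : V -> F).

Definition nc_space : Prop :=
  [/\ forall x y z, mul x (mul y z) = mul (mul x y) z,
      forall c x y z, mul (c *: x + y) z = c *: mul x z + mul y z,
      forall c x y z, mul z (c *: x + y) = c *: mul z x + mul z y,
      forall c x y, phi (c *: x + y) = c * phi x + phi y &
      forall e, (forall x, mul e x = x /\ mul x e = x) -> phi e = 1].

Definition subalg (C : V -> Prop) : Prop :=
  [/\ C 0, forall x y, C x -> C y -> C (x + y),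
      forall c x, C x -> C (c *: x) & forall x y, C x -> C y -> C (mul x y)].

Definition phil (s : seq V) : F :=
  if s is x :: t then phi (foldl mul x t) else 1.

Definition mono_indep (K : Type) (ltK : K -> K -> Prop) (C : K -> V -> Prop) : Prop :=
  forall (n p : nat) (c : nat -> V) (kk : nat -> K),
    (p < n)%N ->
    (forall i, (i < n)%N -> C (kk i) (c i)) ->
    ((0 < p)%N -> ltK (kk p.-1) (kk p)) ->
    ((p.+1 < n)%N -> ltK (kk p.+1) (kk p)) ->
    phil [seq c i | i <- iota 0 n] =
    phi (c p) * phil [seq c i | i <- iota 0 n & i != p].

Definition classical_indep (C1 C2 : V -> Prop) : Prop :=
  forall (n : nat) (x : nat -> V) (inL : nat -> bool),
    (0 < n)%N ->
    (forall i, (i < n)%N -> if inL i then C1 (x i) else C2 (x i)) ->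
    phil [seq x i | i <- iota 0 n] =
    phil [seq x i | i <- iota 0 n & inL i] *
    phil [seq x i | i <- iota 0 n & ~~ inL i].

Variables (d : Order.disp_t) (K : orderType d) (Asub : K -> bool -> V -> Prop).

(* letters of the free product (without units) of all A_{k,s}: tag (k,s) and element *)
Definition letter := (K * bool * V)%type.
Definition word := seq letter.

(* phi o iota on words (empty word = unit, value 1) *)
Definition phiw (w : word) : F := phil [seq l.2 | l <- w].

Definition valid (T : seq K) (w : word) : Prop :=
  forall l, l \in w -> l.1.1 \in T /\ Asub l.1.1 l.1.2 l.2.

(* Phi, given on words, is (the word-form of) a linear functional on the
   unitization of the free product of the A_{k,s}, k in T, s in {l,r}:
   multilinear in each letter, and adjacent letters from the same algebra
   may be multiplied. *)
Definition lin_fp (T : seq K) (Phi : word -> F) : Prop :=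
  [/\ forall u v k s a b, valid T (u ++ v) -> k \in T -> Asub k s a -> Asub k s b ->
        Phi (u ++ (k, s, a + b) :: v) = Phi (u ++ (k, s, a) :: v) + Phi (u ++ (k, s, b) :: v),
      forall u v k s c a, valid T (u ++ v) -> k \in T -> Asub k s a ->
        Phi (u ++ (k, s, c *: a) :: v) = c * Phi (u ++ (k, s, a) :: v) &
      forall u v k s a b, valid T (u ++ v) -> k \in T -> Asub k s a -> Asub k s b ->
        Phi (u ++ (k, s, a) :: (k, s, b) :: v) = Phi (u ++ (k, s, mul a b) :: v)].

(* formal linear combinations of words: elements of the unitized free product *)
Definition fc := seq (F * word).
Definition fc_one : fc := [:: (1, [::])].
Definition fc_mul (x y : fc) : fc := [seq (p.1 * q.1, p.2 ++ q.2) | p <- x, q <- y].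
Definition ev (Phi : word -> F) (x : fc) : F := \sum_(p <- x) p.1 * Phi p.2.

(* x lies in the unitization of the free product of the A_{k,sd}, k in T *)
Definition in_B (T : seq K) (sd : bool) (x : fc) : Prop :=
  forall p, p \in x -> forall l, l \in p.2 ->
    [/\ l.1.1 \in T, l.1.2 = sd & Asub l.1.1 sd l.2].

Fixpoint runs (f : nat -> bool) (s : seq nat) : seq (seq nat) :=
  match s with
  | [::] => [::]
  | x :: t =>
      match runs f t with
      | [::] => [:: [:: x]]
      | r :: rs => if (if r is y :: _ then f y == f x else false)
                   then (x :: r) :: rs else [:: x] :: r :: rs
      end
  end.

(* the partition pi_{chi,omega} of {0,...,n-1}: maximal intervals of constant omega
   for the order prec_chi (left positions increasing, then right ones decreasing) *)
Definition blocks (n : nat) (chi om : nat -> bool) : seq (seq nat) :=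
  runs om ([seq i <- iota 0 n | chi i] ++ rev [seq i <- iota 0 n | ~~ chi i]).

Definition bprod (b : nat -> fc) (W : seq nat) : fc :=
  foldr (fun i acc => fc_mul (b i) acc) fc_one (sort leq W).

(* the defining property of the c-bi-free product (G, Psi) for the two pairs
   indexed by T1 (omega = false) and T2 (omega = true) *)
Definition cbf_cond (T1 T2 : seq K) (G Psi : word -> F) : Prop :=
  forall (n : nat) (chi om : nat -> bool) (b : nat -> fc),
    (0 < n)%N ->
    (forall i, (i < n)%N -> in_B (if om i then T2 else T1) (chi i) (b i)) ->
    (forall W, W \in blocks n chi om -> ev Psi (bprod b W) = 0) ->
    ev Psi (bprod b (iota 0 n)) = 0 /\
    ev G (bprod b (iota 0 n)) = \prod_(W <- blocks n chi om) ev G (bprod b W).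

(* G = G1 |>|> G2 (bi-monotonic product), G1 a functional for the pairs
   indexed by T1 and G2 for those indexed by T2: G is the first component of the
   c-bi-free product of (unital ext. of G1, delta_1) and (unital ext. of G2, same). *)
Definition bm_prod (T1 : seq K) (G1 : word -> F) (T2 : seq K) (G2 : word -> F)
    (G : word -> F) : Prop :=
  exists Psi : word -> F,
    [/\ lin_fp (T1 ++ T2) G, lin_fp (T1 ++ T2) Psi, G [::] = 1 & Psi [::] = 1] /\
    [/\ (forall w, w != [::] -> valid T1 w -> G w = G1 w /\ Psi w = 0),
        (forall w, w != [::] -> valid T2 w -> G w = G2 w /\ Psi w = G2 w) &
        cbf_cond T1 T2 G Psi].

(* bm_iter s G : G = phi_{k1} |>|> ... |>|> phi_{kp} (left-nested), s = [k1;...;kp] *)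
Inductive bm_iter : seq K -> (word -> F) -> Prop :=
| bm_iter1 k G :
    (forall w, w != [::] -> valid [:: k] w -> G w = phiw w) -> bm_iter [:: k] G
| bm_iterS s k G1 G :
    bm_iter s G1 -> bm_prod s G1 [:: k] phiw G -> bm_iter (rcons s k) G.

Definition bm_indep : Prop :=
  forall s : seq K, sorted (fun x y => (x < y)%O) s -> s != [::] ->
    exists G, bm_iter s G /\
      (forall w, w != [::] -> valid s w -> phiw w = G w).

End NCSpace.

(* For an index M above all indices in T, bi-monotonic independence presents phi on the
   algebras indexed by T and M as the first component of a c-bi-free product (phi, Psi), where
   Psi vanishes on nonempty words from the lower algebras and agrees with phi on words from
   the A_{M,s}. Expanding each top letter x as (x - phi(x) 1) + phi(x) 1, the c-bi-free
   condition kills every term that keeps a centred top block, because all other blocks are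
   automatically centred for Psi. This applies to one-sided words whose top letters are
   pairwise non-adjacent (each top letter is a block of its own) and to words mixing A_{k,l}
   and A_{j,r}, j != k (the top letters form a single block, centred by a suitable choice
   of scalars). What survives is phi(w) = (prod of phi over the top letters) phi(rest),
   resp. phi(w) = phi(w_L) phi(w_R). Monotone independence then follows by induction on the
   length: multiply adjacent letters from a common algebra, then split off the letters of
   the largest index. *)

From HB Require Import structures.
From mathcomp Require Import all_boot all_order all_algebra.
From mathcomp Require Import ring.
Import Order.TTheory GRing.Theory.

Set Implicit Arguments. Unset Strict Implicit. Unset Printing Implicit Defensive.
Local Open Scope ring_scope.

Section Runs.
Variable f : nat -> bool.

Lemma runs_flatten s : flatten (runs f s) = s.
Proof.
elim: s => [|x t IH] //=.
case: (runs f t) IH => [|r rs] IH; first by rewrite -IH.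
by case: ifP => _ /=; rewrite -IH.
Qed.

Lemma runs_sub s W : W \in runs f s -> {subset W <= s}.
Proof.
by move=> hW i iW; rewrite -[s]runs_flatten; apply/flattenP; exists W.
Qed.

Lemma runs_neq0_const s W :
  W \in runs f s -> W != [::] /\ {in W, forall i, f i = f (head 0%N W)}.
Proof.
elim: s W => [|x t IH] W //=.
case E: (runs f t) IH => [|r rs] IH.
  by rewrite inE => /eqP ->; split => // y; rewrite inE => /eqP ->.
have [rn rc] := IH r (mem_head _ _).
have IHrs W' : W' \in rs -> W' != [::] /\ {in W', forall i, f i = f (head 0%N W')}.
  by move=> h; apply: IH; rewrite inE h orbT.
case: ifP => hr.
  rewrite inE => /orP [/eqP -> | /IHrs //]; split => // y.
  rewrite inE => /orP [/eqP -> // | yr] /=; rewrite rc //.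
  by case: r rn rc hr {IH IHrs E yr} => // z r _ _ /= /eqP.
rewrite !inE => /orP [/eqP -> | /orP [/eqP -> | /IHrs //]] //.
by split => // y; rewrite inE => /eqP ->.
Qed.

Lemma runs_const s c : s != [::] -> {in s, forall i, f i = c} -> runs f s = [:: s].
Proof.
elim: s => [|x t IH] //= _ H.
case: t IH H => [|y t] IH H //=.
rewrite /= in IH; rewrite IH //; last by move=> z zt; apply: H; rewrite inE zt orbT.
by rewrite (H y) ?(H x) ?eqxx // !inE eqxx ?orbT.
Qed.

Lemma runs_cat_const s1 s2 c :
  {in s1, forall i, f i = c} -> {in s2, forall i, f i = ~~ c} ->
  runs f (s1 ++ s2) = [seq W <- [:: s1; s2] | W != [::]].
Proof.
move=> H1 H2; case: (eqVneq s2 [::]) => [-> | n2].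
  by case: (eqVneq s1 [::]) => [-> | n1]; rewrite ?cats0 ?(runs_const n1 H1) //= n1.
case: (eqVneq s1 [::]) => [-> | n1]; first by rewrite /= (runs_const n2 H2) n2.
rewrite /= n1 n2; elim: s1 n1 H1 => [|x t IH] //= _ H1.
case: t IH H1 => [|y t] IH H1 /=.
  rewrite (runs_const n2 H2).
  case: s2 n2 H2 {IH} => // z s2 _ H2 /=.
  by rewrite (H2 z (mem_head _ _)) (H1 x (mem_head _ _)); case: c {H1 H2}.
rewrite /= in IH; rewrite IH //; last by move=> z zt; apply: H1; rewrite inE zt orbT.
by rewrite (H1 y) ?(H1 x) ?eqxx // !inE eqxx ?orbT.
Qed.

(* Within a run all elements have the same [f]-value and are consecutive in [s]. *)
Lemma runs_true_singleton s W :
  sorted (fun i j => ~~ (f i && f j)) s -> W \in runs f s -> f (head 0%N W) ->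
  W = [:: head 0%N W].
Proof.
elim: s W => [|x t IH] W //= hs.
have ht := path_sorted hs.
case E: (runs f t) IH => [|r rs] IH.
  by rewrite inE => /eqP ->.
case: ifP => hr; last first.
  by rewrite !inE => /orP [/eqP -> | hW] //; apply: IH; rewrite // inE hW orbT.
case: r hr E IH => // z r' /eqP hz E IH.
rewrite inE => /orP [/eqP -> /= fx | hW]; last by apply: IH; rewrite // inE hW orbT.
have := runs_flatten t; rewrite E; case: (t) hs => [|y t'] //= /andP [hxy _] [hzy _].
by rewrite -hzy hz fx in hxy.
Qed.

End Runs.

Lemma sorted_rem (T : Type) (r : rel T) u x v :
  (forall a b, r a x -> r a b) -> sorted r (u ++ x :: v) -> sorted r (u ++ v).
Proof.
move=> H; rewrite sorted_cat_cons => /andP [h1 h2].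
case: u h1 => [|y u] /=; first by move=> _; apply: path_sorted h2.
rewrite rcons_path cat_path => /andP [-> h3] /=.
case: v h2 => //= z v /andP [h4 ->]; by rewrite (H _ _ h3).
Qed.

(* By induction on the length: moving the scalar of one top letter changes [f] and [g] by
   the same multiple of their values on the shorter word, which agree. *)
Section AffineAgreement.
Variables (L : Type) (R : pzRingType) (top : L -> bool) (adm : seq (L * R) -> Prop)
  (f g : seq (L * R) -> R).
Hypotheses
  (f_affine : forall u v l a a',
     f (u ++ (l, a') :: v) = f (u ++ (l, a) :: v) + (a' - a) * f (u ++ v))
  (g_affine : forall u v l a a', top l ->
     g (u ++ (l, a') :: v) = g (u ++ (l, a) :: v) + (a' - a) * g (u ++ v))
  (adm_drop : forall u v l a, adm (u ++ (l, a) :: v) -> top l -> adm (u ++ v))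
  (adm_set : forall u v l a a', adm (u ++ (l, a) :: v) -> top l -> adm (u ++ (l, a') :: v))
  (adm_bottom0 : forall u v l a, adm (u ++ (l, a) :: v) -> ~~ top l -> a = 0)
  (eq_no_top : forall w, adm w -> ~~ has (fun x => top x.1) w -> f w = g w)
  (eq_witness : forall w, adm w -> has (fun x => top x.1) w ->
     exists2 w', adm w' & map fst w' = map fst w /\ f w' = g w').

Lemma affine_agreement w : adm w -> f w = g w.
Proof.
move: {2}(size w) (leqnn (size w)) => n; elim: n w => [|n IHn] w.
  by rewrite leqn0 => /nilP -> ok; apply: eq_no_top.
move=> hs ok.
have same_skeleton v1 v2 u : map fst v1 = map fst v2 -> (size (u ++ v1) <= n.+1)%N ->
    adm (u ++ v1) -> adm (u ++ v2) -> (f (u ++ v1) = g (u ++ v1) <-> f (u ++ v2) = g (u ++ v2)).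
  elim: v1 v2 u => [|[l a1] v1 IH] [|[l' a2] v2] u //= [<- ev] hsz ok1 ok2.
  have hsz' : (size (u ++ (l, a2) :: v1) <= n.+1)%N by rewrite !size_cat /= in hsz *.
  case ht: (top l); last first.
    have e1 := adm_bottom0 ok1 (negbT ht); have e2 := adm_bottom0 ok2 (negbT ht); subst a1 a2.
    by rewrite -!cat_rcons; apply: IH; rewrite ?cat_rcons.
  have hsm : (size (u ++ v1) <= n)%N by rewrite !size_cat /= addnS ltnS in hsz *.
  have IHu := IHn _ hsm (adm_drop ok1 ht).
  have e1 : (f (u ++ (l, a1) :: v1) = g (u ++ (l, a1) :: v1)) <->
            (f (u ++ (l, a2) :: v1) = g (u ++ (l, a2) :: v1)).
    rewrite (f_affine u v1 l a1 a2) (g_affine u v1 a1 a2 ht) IHu.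
    by split=> [-> // | /addIr].
  rewrite e1 -!cat_rcons; apply: IH; rewrite ?cat_rcons //.
  exact: adm_set ok1 ht.
case hh: (has (fun x => top x.1) w); last by apply: eq_no_top; rewrite ?hh.
have [w' ok' [ef eq']] := eq_witness ok hh.
have sz : size w' = size w by rewrite -(size_map fst w') ef size_map.
by apply/(same_skeleton w' w [::] ef); rewrite /= ?sz.
Qed.

End AffineAgreement.

Section FormalProducts.
Variables (F : fieldType) (V : lmodType F) (d : Order.disp_t) (K : orderType d).
Local Notation letter := (K * bool * V)%type.
Local Notation word := (seq letter).
Local Notation item := (letter * F)%type.

Definition fc_prod (bs : seq (fc V K)) : fc V K := foldr (@fc_mul F V d K) (fc_one V K) bs.

Definition ev_after (Phi : word -> F) (pre : word) (X : fc V K) : F :=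
  \sum_(q <- X) q.1 * Phi (pre ++ q.2).

Definition fc_letter (l : letter) : fc V K := [:: (1, [:: l])].

(* The item [(l, a)] stands for [l + a 1] in the unitization. *)
Definition fc_shift (x : item) : fc V K := [:: (1, [:: x.1]); (x.2, [::])].

Definition ev_shifted (Phi : word -> F) (w : seq item) : F :=
  ev Phi (fc_prod (map fc_shift w)).

Lemma ev_after_nil Phi X : ev Phi X = ev_after Phi [::] X.
Proof. by []. Qed.

Lemma ev_after_cat Phi pre X Y :
  ev_after Phi pre (X ++ Y) = ev_after Phi pre X + ev_after Phi pre Y.
Proof. by rewrite /ev_after big_cat. Qed.

Lemma ev_after_mul Phi pre A X :
  ev_after Phi pre (fc_mul A X) = \sum_(p <- A) p.1 * ev_after Phi (pre ++ p.2) X.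
Proof.
elim: A => [|p A IH]; first by rewrite /fc_mul /= big_nil /ev_after big_nil.
rewrite big_cons -IH /fc_mul /= ev_after_cat; congr (_ + _).
rewrite /ev_after big_map mulr_sumr; apply: eq_bigr => q _ /=.
by rewrite mulrA catA.
Qed.

Lemma ev_after_prodD Phi pre u B1 B2 v :
  ev_after Phi pre (fc_prod (u ++ (B1 ++ B2) :: v)) =
  ev_after Phi pre (fc_prod (u ++ B1 :: v)) + ev_after Phi pre (fc_prod (u ++ B2 :: v)).
Proof.
elim: u pre => [|A u IH] pre /=; rewrite !ev_after_mul; first by rewrite big_cat.
by rewrite -big_split; apply: eq_bigr => p _ /=; rewrite IH mulrDr.
Qed.

Lemma ev_after_prod_scalar Phi pre u c v :
  ev_after Phi pre (fc_prod (u ++ [:: (c, [::])] :: v)) =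
  c * ev_after Phi pre (fc_prod (u ++ v)).
Proof.
elim: u pre => [|A u IH] pre /=; rewrite !ev_after_mul.
  by rewrite big_cons big_nil addr0 /= cats0.
by rewrite mulr_sumr; apply: eq_bigr => p _; rewrite IH mulrCA.
Qed.

Lemma ev_after_letters Phi pre v :
  ev_after Phi pre (fc_prod (map fc_letter v)) = Phi (pre ++ v).
Proof.
elim: v pre => [|l v IH] pre /=.
  by rewrite /ev_after /fc_one big_cons big_nil addr0 mul1r.
by rewrite ev_after_mul big_cons big_nil addr0 /= mul1r IH -catA.
Qed.

Lemma ev_after_shift0 Phi pre u w : {in w, forall x, x.2 = 0} ->
  ev_after Phi pre (fc_prod (u ++ map fc_shift w)) =
  ev_after Phi pre (fc_prod (u ++ map fc_letter (map fst w))).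
Proof.
elim: w u => [|x w IH] u H //=.
have -> : fc_shift x = fc_letter x.1 ++ [:: (x.2, [::])] by [].
rewrite ev_after_prodD ev_after_prod_scalar (H x (mem_head _ _)) mul0r addr0.
by rewrite -!cat_rcons IH // => y yw; apply: H; rewrite inE yw orbT.
Qed.

Lemma ev_shifted0 Phi w : {in w, forall x, x.2 = 0} -> ev_shifted Phi w = Phi (map fst w).
Proof.
move=> H; rewrite /ev_shifted ev_after_nil -(cat0s (map fc_shift w)) ev_after_shift0 //.
exact: ev_after_letters.
Qed.

Lemma ev_shifted_affine Phi u v l a a' :
  ev_shifted Phi (u ++ (l, a') :: v) =
  ev_shifted Phi (u ++ (l, a) :: v) + (a' - a) * ev_shifted Phi (u ++ v).
Proof.
rewrite /ev_shifted !map_cat !map_cons.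
have h c : fc_shift (l, c) = fc_letter l ++ [:: (c, [::])] by [].
by rewrite !h !ev_after_nil !ev_after_prodD !ev_after_prod_scalar; ring.
Qed.

Lemma ev_shifted_nil Phi : Phi [::] = 1 -> ev_shifted Phi [::] = 1.
Proof. by move=> h; rewrite /ev_shifted /ev /= /fc_one big_cons big_nil addr0 mul1r. Qed.

Lemma ev_shifted1 Phi (x : item) : ev_shifted Phi [:: x] = Phi [:: x.1] + x.2 * Phi [::].
Proof.
rewrite /ev_shifted /ev /= /fc_mul /fc_one /= !big_cons big_nil /=.
by rewrite !mul1r !mulr1 addr0.
Qed.

Lemma ev_after_ext Phi1 Phi2 pre w :
  (forall u, {subset u <= map fst w} -> Phi1 (pre ++ u) = Phi2 (pre ++ u)) ->
  ev_after Phi1 pre (fc_prod (map fc_shift w)) = ev_after Phi2 pre (fc_prod (map fc_shift w)).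
Proof.
elim: w pre => [|x w IH] pre H /=.
  by rewrite /ev_after /fc_one !big_cons !big_nil /= H.
rewrite !ev_after_mul !big_cons !big_nil /=; congr (_ * _ + (_ * _ + _)).
  apply: IH => u su; rewrite -catA; apply: H => y.
  by rewrite !inE => /orP [/eqP -> | /su ->]; rewrite ?eqxx ?orbT.
by apply: IH => u su; rewrite cats0; apply: H => y /su yw; rewrite inE yw orbT.
Qed.

Lemma ev_shifted_ext Phi1 Phi2 w :
  (forall u, {subset u <= map fst w} -> Phi1 u = Phi2 u) ->
  ev_shifted Phi1 w = ev_shifted Phi2 w.
Proof. by move=> H; apply: (@ev_after_ext _ _ [::]). Qed.

Lemma bprod_shift (f : nat -> item) W :
  bprod (fun i => fc_shift (f i)) W = fc_prod (map fc_shift (map f (sort leq W))).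
Proof. by rewrite /bprod /fc_prod; elim: (sort leq W) => //= a t ->. Qed.

(* The scalars of the [tp]-items can be chosen so that their product is centred:
   while other [tp]-items remain, the current one is set to keep the prefix at value [1]. *)
Lemma exists_centring_shifts Phi (tp : pred letter) (p w : seq item) :
  ev_shifted Phi p = 1 -> has (fun x => tp x.1) w ->
  exists w', [/\ map fst w' = map fst w, {in w', forall x, ~~ tp x.1 -> x \in w} &
             ev_shifted Phi (p ++ [seq x <- w' | tp x.1]) = 0].
Proof.
elim: w p => [|y w IH] p // hp /= hh.
case ht: (tp y.1); last first.
  rewrite ht /= in hh; have [w' [e1 e2 e3]] := IH _ hp hh.
  exists (y :: w'); split; first by rewrite /= e1.
    move=> x; rewrite inE => /orP [/eqP -> _ | xw h]; first by rewrite mem_head.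
    by rewrite inE (e2 x xw h) orbT.
  by rewrite /= ht.
case hw: (has (fun x => tp x.1) w).
  pose a := 1 - ev_shifted Phi (p ++ [:: (y.1, 0)]).
  have hc : ev_shifted Phi (rcons p (y.1, a)) = 1.
    by rewrite -cats1 (ev_shifted_affine _ p [::] y.1 0 a) cats0 hp mulr1 subr0 /a; ring.
  have [w' [e1 e2 e3]] := IH _ hc hw.
  exists ((y.1, a) :: w'); split; first by rewrite /= e1.
    move=> x; rewrite inE => /orP [/eqP -> | xw]; first by rewrite /= ht.
    by move=> h; rewrite inE (e2 x xw h) orbT.
  by rewrite /= ht -cat_rcons.
pose a := - ev_shifted Phi (p ++ [:: (y.1, 0)]).
exists ((y.1, a) :: w); split=> //.
  move=> x; rewrite inE => /orP [/eqP -> | xw]; first by rewrite /= ht.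
  by rewrite inE xw orbT.
rewrite /= ht (_ : [seq x <- w | tp x.1] = [::]).
  by rewrite (ev_shifted_affine _ p [::] y.1 0 a) cats0 hp mulr1 subr0 /a; ring.
by apply/eqP; rewrite -size_eq0 size_filter eqn0Ngt -has_count hw.
Qed.

End FormalProducts.

Lemma mem_blocks_seq n (chi : nat -> bool) i :
  (i \in [seq j <- iota 0 n | chi j] ++ rev [seq j <- iota 0 n | ~~ chi j]) = (i < n)%N.
Proof. by rewrite mem_cat mem_rev !mem_filter mem_iota /=; case: (chi i); rewrite ?orbF. Qed.

Lemma mem_blocks n (chi om : nat -> bool) W : W \in blocks n chi om ->
  [/\ W != [::], {in W, forall i, i < n}%N & {in W, forall i, om i = om (head 0%N W)}].
Proof.
move=> hW; have [nW cW] := runs_neq0_const hW.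
by split=> // i /(runs_sub hW); rewrite mem_blocks_seq.
Qed.

Lemma eq_in_blocks n (chi chi' om : nat -> bool) :
  {in gtn n, chi =1 chi'} -> blocks n chi om = blocks n chi' om.
Proof.
move=> e; rewrite /blocks; congr (runs om (_ ++ rev _)); apply: eq_in_filter => i;
  by rewrite mem_iota => /andP [_ /e ->].
Qed.

Lemma blocks_const n (s : bool) om :
  blocks n (fun _ => s) om = runs om (if s then iota 0 n else rev (iota 0 n)).
Proof.
have h1 (t : seq nat) : [seq i <- t | true] = t by elim: t => //= a t ->.
have h2 (t : seq nat) : [seq i <- t | false] = [::] by elim: t.
by rewrite /blocks; case: s => /=; rewrite h1 h2 ?cats0.
Qed.

Lemma mem_cat_cons (T : eqType) (u v : seq T) x y :
  (y \in u ++ x :: v) = (y == x) || (y \in u ++ v).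
Proof. by rewrite !mem_cat inE orbCA. Qed.

Lemma cat_cons_neq0 (T : eqType) (u v : seq T) x : u ++ x :: v != [::].
Proof. by case: u. Qed.

Lemma head_in (T : eqType) (x0 : T) s : s != [::] -> head x0 s \in s.
Proof. by case: s => //= x s _; rewrite mem_head. Qed.

Lemma rcons_neq0 (T : eqType) (x : T) s : rcons s x != [::].
Proof. by case: s. Qed.

Section BiMonotone.
Variables (F : fieldType) (V : lmodType F) (mul : V -> V -> V) (phi : V -> F)
  (d : Order.disp_t) (K : orderType d) (Asub : K -> bool -> V -> Prop).

Local Notation letter := (K * bool * V)%type.
Local Notation item := (letter * F)%type.
Local Notation phiW := (@phiw F V mul phi d K).

Definition on_side (s : bool) (w : seq letter) : Prop :=
  {in w, forall l, l.1.2 = s /\ Asub l.1.1 s l.2}.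

Definition keyed (M : K) (l : letter) : bool := l.1.1 == M.

Definition apart (M : K) : rel letter := fun x y => ~~ (keyed M x && keyed M y).

(* [(G, Psi)] is the c-bi-free product of [(G, delta)] on the pairs indexed by [T]
   and of [(phi, phi)] on the pair indexed by [M]. *)
Definition cbf_with_top (T : seq K) (M : K) (G Psi : seq letter -> F) : Prop :=
  [/\ G [::] = 1 /\ Psi [::] = 1,
      forall w, w != [::] -> valid Asub T w -> Psi w = 0,
      forall w, w != [::] -> valid Asub [:: M] w -> G w = phiW w /\ Psi w = phiW w &
      cbf_cond Asub T [:: M] G Psi].

Hypothesis bmi : bm_indep mul phi Asub.

Lemma bm_indep_top T M : T != [::] -> sorted <%O (rcons T M) ->
  exists G Psi, cbf_with_top T M G Psi /\ forall w, valid Asub (rcons T M) w -> G w = phiW w.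
Proof.
move=> nT sTM.
have [G [hit heq]] := bmi sTM (rcons_neq0 M T).
have [G1 [Psi [[_ _ hG0 hP0] [hT hM hc]]]] : exists G1, bm_prod mul Asub T G1 [:: M] phiW G.
  move: hit; move E: (rcons T M) => s hit; case: hit E => [k G0 _ | s0 k G1 G0 _ hp] E.
    by move/(congr1 size): E nT; rewrite size_rcons -size_eq0 => -[->].
  by case/rcons_inj: E => -> ->; exists G1.
exists G, Psi; split.
  by split=> // w wn vw; have [] := hT w wn vw.
by move=> w vw; case: (eqVneq w [::]) => [-> | wn] //; rewrite heq.
Qed.

(* The c-bi-free condition makes a shifted product vanish as soon as every block of
   top letters is centred for [G]: the other blocks are centred for [Psi] automatically. *)
Lemma cbf_shifted_eq0 T M G Psi (x0 : item) (w : seq item) :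
  cbf_with_top T M G Psi ->
  {in w, forall x, Asub x.1.1.1 x.1.1.2 x.1.2 /\ x.1.1.1 \in M :: T} ->
  {in w, forall x, ~~ keyed M x.1 -> x.2 = 0} ->
  has (fun x => keyed M x.1) w ->
  (forall W, W \in blocks (size w) (fun i => (nth x0 w i).1.1.2)
                                   (fun i => keyed M (nth x0 w i).1) ->
     keyed M (nth x0 w (head 0%N W)).1 ->
     ev_shifted G [seq nth x0 w i | i <- sort leq W] = 0) ->
  ev_shifted G w = 0.
Proof.
move=> [[hG0 hP0] hT hM hc] hw hw0 hhas htop.
set n := size w in htop; set chi := fun i => _ in htop; set om := fun i => _ in htop.
pose b i := fc_shift (nth x0 w i).
have ev_block Phi W : ev Phi (bprod b W) = ev_shifted Phi [seq nth x0 w i | i <- sort leq W].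
  by rewrite bprod_shift.
have memw i : (i < n)%N -> nth x0 w i \in w := @mem_nth _ x0 w i.
have hB i : (i < n)%N -> in_B Asub (if om i then [:: M] else T) (chi i) (b i).
  move=> hi p; rewrite !inE => /orP [/eqP -> | /eqP ->] l //=; rewrite inE => /eqP ->.
  have [hA hk] := hw _ (memw i hi).
  split=> //; rewrite /om /keyed; case: ifP => hm; first by rewrite inE.
  by move: hk; rewrite inE hm.
have hPsi W : W \in blocks n chi om -> ev Psi (bprod b W) = 0.
  move=> hW; have [nW inW cW] := mem_blocks hW; rewrite ev_block.
  case hom: (om (head 0%N W)).
    rewrite -(htop W hW hom); apply: ev_shifted_ext => u su.
    case: (eqVneq u [::]) => [-> | un]; first by rewrite hP0 hG0.
    have vu : valid Asub [:: M] u.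
      move=> l /su /mapP [x /mapP [i]]; rewrite mem_sort => iW -> ->.
      have [hA _] := hw _ (memw i (inW i iW)).
      have hk : om i by rewrite (cW i iW) hom.
      by split=> //; rewrite inE; exact: hk.
    by have [-> ->] := hM u un vu.
  rewrite ev_shifted0; last first.
    move=> x /mapP [i]; rewrite mem_sort => iW ->.
    by apply: hw0; [apply: memw; apply: inW | rewrite -/(om i) (cW i iW) hom].
  apply: hT; first by rewrite -size_eq0 !size_map size_sort size_eq0.
  move=> l /mapP [x /mapP [i]]; rewrite mem_sort => iW -> ->.
  have [hA hk] := hw _ (memw i (inW i iW)).
  have hm : ~~ om i by rewrite (cW i iW) hom.
  by split=> //; move: hk; rewrite inE -[_ == M]/(om i) (negbTE hm).
have n0 : (0 < n)%N by rewrite /n; case: (w) hhas.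
have [_ hG] := hc n chi om b n0 hB hPsi.
move: hG; rewrite ev_block (sorted_sort leq_trans (iota_sorted 0 n)).
rewrite [map _ _](mkseq_nth x0) => ->.
have [i hi hom] := has_nthP x0 hhas.
have : i \in flatten (blocks n chi om) by rewrite runs_flatten mem_blocks_seq.
move=> /flattenP [W hW iW]; have [_ _ cW] := mem_blocks hW.
apply/eqP; rewrite prodf_seq_eq0; apply/hasP; exists W => //=.
by rewrite ev_block htop // -/(om _) -(cW i iW).
Qed.

Definition sep_items (s : bool) (M : K) (T : seq K) (w : seq item) : Prop :=
  [/\ {in w, forall x, [/\ x.1.1.2 = s, Asub x.1.1.1 s x.1.2 & x.1.1.1 \in M :: T]},
      {in w, forall x, ~~ keyed M x.1 -> x.2 = 0} &
      sorted (apart M) (map fst w)].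

Lemma sep_items_centred_eq0 T M G Psi s (w : seq item) :
  cbf_with_top T M G Psi -> sep_items s M T w -> has (fun x => keyed M x.1) w ->
  {in w, forall x, keyed M x.1 -> x.2 = - phi x.1.2} ->
  ev_shifted G w = 0.
Proof.
move=> cbf [hw hw0 hsep] hhas hcent; have [[hG0 _] _ hM _] := cbf.
pose x0 : item := ((M, s, 0), 0).
apply: (cbf_shifted_eq0 (x0 := x0) cbf) => // [x /hw [-> hA hk] //|W].
set n := size w; set om := fun i => keyed M _.
have memw i : (i < n)%N -> nth x0 w i \in w := @mem_nth _ x0 w i.
move=> hW hom; have [nW inW _] := mem_blocks hW; have hi := inW _ (head_in 0%N nW).
move: hW; rewrite (@eq_in_blocks _ _ (fun _ => s)) => [|i /memw /hw [] //].
rewrite blocks_const => hW.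
have sep_iota : sorted (fun i j => ~~ (om i && om j)) (iota 0 n).
  by move: hsep; rewrite -[w in map _ w](mkseq_nth x0) -map_comp sorted_map; exact: sub_sorted.
have sep : sorted (fun i j => ~~ (om i && om j)) (if s then iota 0 n else rev (iota 0 n)).
  by case: (s) => //; rewrite rev_sorted; apply: sub_sorted sep_iota => i j; rewrite andbC.
rewrite (runs_true_singleton sep hW hom) /= ev_shifted1 hG0 mulr1.
have [hs hA _] := hw _ (memw _ hi).
have v1 : valid Asub [:: M] [:: (nth x0 w (head 0%N W)).1].
  by move=> l; rewrite inE => /eqP ->; split; [rewrite inE; exact: hom | rewrite hs].
by have [-> _] := hM [:: _] isT v1; rewrite hcent ?memw // addrN.
Qed.

Lemma sep_items_drop s M T u v x :
  sep_items s M T (u ++ x :: v) -> keyed M x.1 -> sep_items s M T (u ++ v).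
Proof.
move=> [hw hw0 hsep] ht; split=> [y hy | y hy |].
- by apply: hw; rewrite mem_cat_cons hy orbT.
- by apply: hw0; rewrite mem_cat_cons hy orbT.
- move: hsep; rewrite !map_cat; apply: sorted_rem => a b.
  by rewrite /apart ht andbT => /negbTE ->.
Qed.

Lemma sep_items_set s M T u v l a a' :
  sep_items s M T (u ++ (l, a) :: v) -> keyed M l -> sep_items s M T (u ++ (l, a') :: v).
Proof.
move=> [hw hw0 hsep] ht; split.
- move=> y; rewrite mem_cat_cons => /orP [/eqP -> | hy].
    by apply: (hw (l, a)); rewrite mem_cat_cons eqxx.
  by apply: hw; rewrite mem_cat_cons hy orbT.
- move=> y; rewrite mem_cat_cons => /orP [/eqP -> | hy]; first by rewrite /= ht.
  by apply: hw0; rewrite mem_cat_cons hy orbT.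
- by move: hsep; rewrite !map_cat /=.
Qed.

Lemma ev_shifted_sep_items T M G Psi s (w : seq item) :
  cbf_with_top T M G Psi -> sep_items s M T w ->
  ev_shifted G w =
  G [seq x.1 | x <- w & ~~ keyed M x.1] * \prod_(x <- w | keyed M x.1) (phi x.1.2 + x.2).
Proof.
move=> cbf; apply: (affine_agreement (top := keyed M) (adm := sep_items s M T)
  (f := ev_shifted G) (g := fun w => G [seq x.1 | x <- w & ~~ keyed M x.1] *
                                     \prod_(x <- w | keyed M x.1) (phi x.1.2 + x.2))).
- exact: ev_shifted_affine.
- move=> u v l a a' ht; rewrite !filter_cat /= ht /= !big_cat !big_cons /= ht; ring.
- by move=> u v l a ok ht; apply: (sep_items_drop (x := (l, a))).
- exact: sep_items_set.
- move=> u v l a [_ hw0 _] ht; apply: (hw0 (l, a)) => //.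
  by rewrite mem_cat_cons eqxx.
- move=> w0 [_ hw0 _] hn; have hb x : x \in w0 -> ~~ keyed M x.1.
    by move=> xw; apply: contra hn => hm; apply/hasP; exists x.
  rewrite ev_shifted0 => [|x xw]; last by apply: hw0 => //; apply: hb.
  rewrite big_hasC // mulr1; congr G; congr map; apply/esym/all_filterP.
  by apply/allP.
- move=> w0 [hw hw0 hsep] hn.
  pose w' := [seq (if keyed M x.1 then (x.1, - phi x.1.2) else x) | x <- w0].
  have ef : map fst w' = map fst w0.
    by rewrite -map_comp; apply: eq_map => x /=; case: ifP.
  have ok' : sep_items s M T w'.
    split; last by rewrite ef.
    + by move=> x /mapP [y yw ->]; case: ifP => _; exact: (hw y yw).
    + by move=> x /mapP [y yw ->]; case: ifP => hm /=; [rewrite hm | exact: hw0].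
  exists w' => //; split=> //.
  rewrite (sep_items_centred_eq0 cbf ok'); last 2 first.
  + by rewrite -(has_map fst) ef has_map.
  + by move=> x /mapP [y yw ->]; case: ifP => hm //=; rewrite hm.
  apply/esym/eqP; rewrite mulf_eq0 prodf_seq_eq0; apply/orP; right.
  move/hasP: hn => [x xw hx]; apply/hasP.
  exists (if keyed M x.1 then (x.1, - phi x.1.2) else x); first exact: map_f.
  by rewrite hx /= hx addrN eqxx.
Qed.

Lemma phiw_factor_top s M (w : seq letter) :
  on_side s w -> {in w, forall l, (l.1.1 <= M)%O} ->
  sorted (apart M) w ->
  phiW w = (\prod_(l <- w | keyed M l) phi l.2) * phiW [seq l <- w | ~~ keyed M l].
Proof.
move=> hw hwM hsep.
case hh: (has (keyed M) w); last first.
  rewrite big_hasC ?hh // mul1r; congr phiW; apply/esym/all_filterP.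
  by apply/allP => l lw; apply: contraFN hh => h; apply/hasP; exists l.
set T := sort <=%O (undup [seq l.1.1 | l <- w & ~~ keyed M l]).
have hTM y : y \in T -> (y < M)%O.
  rewrite mem_sort mem_undup => /mapP [l]; rewrite mem_filter => /andP [hl lw] ->.
  by rewrite lt_neqAle hl hwM.
have sTM : sorted <%O (rcons T M).
  have : sorted <%O T.
    by rewrite lt_sorted_uniq_le sort_uniq undup_uniq sort_sorted //; exact: le_total.
  case: (T) hTM => // x T' hTM /= sT; rewrite rcons_path sT /=.
  by apply: hTM; rewrite mem_last.
have keyT l : l \in w -> l.1.1 \in M :: T.
  move=> lw; rewrite inE; case hm: (l.1.1 == M) => //=.
  by rewrite mem_sort mem_undup; apply/mapP; exists l; rewrite // mem_filter /keyed hm.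
case: (eqVneq T [::]) => [T0 | nT].
  have allM l : l \in w -> keyed M l by move=> /keyT; rewrite T0 inE.
  clear -hsep allM; case: w hsep allM => [|x [|y w]] hsep allM.
  - by rewrite big_nil mul1r.
  - by rewrite big_cons big_nil /= allM ?mem_head //= !mulr1.
  - by move: hsep; rewrite /= /apart !allM ?mem_head // !inE eqxx orbT.
have [G [Psi [cbf hG]]] := bm_indep_top nT sTM.
pose w0 := [seq (l, 0 : F) | l <- w].
have ok0 : sep_items s M T w0.
  split; last by rewrite -map_comp map_id.
  - by move=> x /mapP [l lw ->]; have [-> hA] := hw l lw; split=> //; exact: keyT.
  - by move=> x /mapP [l lw ->].
have vw t : {subset t <= w} -> valid Asub (rcons T M) t.
  move=> st l /st lw; have [e hA] := hw l lw; rewrite e; split=> //.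
  by rewrite mem_rcons; exact: keyT.
have := ev_shifted_sep_items cbf ok0.
rewrite ev_shifted0; last by move=> x /mapP [l _ ->].
rewrite -map_comp map_id (hG w (vw w (fun _ h => h))) => ->.
rewrite mulrC; congr (_ * _).
  by rewrite /w0 big_map; apply: eq_bigr => l _ /=; rewrite addr0.
rewrite /w0 filter_map -map_comp map_id hG //.
by apply: vw => l; rewrite mem_filter => /andP [].
Qed.

Hypotheses (mulA : associative mul)
  (Asub_mul : forall k s x y, Asub k s x -> Asub k s y -> Asub k s (mul x y)).

Definition key_change : rel letter := fun a b => a.1.1 != b.1.1.

Lemma phiw_merge (w1 w2 : seq letter) a b :
  phiW (w1 ++ a :: b :: w2) = phiW (w1 ++ (a.1, mul a.2 b.2) :: w2).
Proof.
rewrite /phiw !map_cat /=.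
by case: (map snd w1) => [|y t] //=; rewrite !foldl_cat /= mulA.
Qed.

Lemma last_key (x y : letter) w : x.1.1 = y.1.1 -> (last x w).1.1 = (last y w).1.1.
Proof. by case/lastP: w => [|w z] //; rewrite !last_rcons. Qed.

Lemma merge_equal_keys s (w : seq letter) : on_side s w ->
  exists w', [/\ on_side s w', sorted key_change w', (size w' <= size w)%N,
    forall pre post, phiW (pre ++ w' ++ post) = phiW (pre ++ w ++ post) &
    forall z, (last z w').1.1 = (last z w).1.1 /\ (head z w').1.1 = (head z w).1.1].
Proof.
elim: w => [|a t IH] hw; first by exists [::].
have [ha hA] := hw a (mem_head _ _).
have on_t : on_side s t by move=> l lt; apply: hw; rewrite inE lt orbT.
have [t' [ht1 ht2 ht3 ht4 ht5]] := IH on_t.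
case: t' ht1 ht2 ht3 ht4 ht5 => [|b t''] ht1 ht2 ht3 ht4 ht5.
  exists [:: a]; split=> // [l | pre post | z]; first by rewrite inE => /eqP ->.
    by have := ht4 (rcons pre a) post; rewrite !cat_rcons.
  by have [<- _] := ht5 a.
have hpre pre post : phiW (pre ++ a :: (b :: t'') ++ post) = phiW (pre ++ (a :: t) ++ post).
  by have := ht4 (rcons pre a) post; rewrite !cat_rcons.
case: (eqVneq a.1.1 b.1.1) => [eab | nab]; last first.
  exists (a :: b :: t''); split=> // [l | | z]; first by rewrite inE => /orP [/eqP -> | /ht1].
  - by apply/andP; split.
  - by have [<- _] := ht5 a.
have [_ hB] := ht1 b (mem_head _ _).
pose m : letter := (a.1, mul a.2 b.2).
exists (m :: t''); split.
- move=> l; rewrite inE => /orP [/eqP -> | lt]; last by apply: ht1; rewrite inE lt orbT.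
  by split=> //; apply: Asub_mul => //; rewrite eab.
- clear -ht2 eab; case: t'' ht2 => //= c t'' /andP [hbc ->].
  by rewrite andbT /key_change eab; exact: hbc.
- by rewrite /= ltnS (leq_trans _ ht3).
- by move=> pre post; rewrite -hpre /= phiw_merge.
- move=> z; split=> //=; have [<- _] := ht5 a.
  by apply: last_key; rewrite /= eab.
Qed.

Lemma exists_max_key (w : seq letter) :
  w != [::] -> exists2 M, {in w, forall l, (l.1.1 <= M)%O} & has (keyed M) w.
Proof.
elim: w => [|a t IH] // _; case: (eqVneq t [::]) => [-> | /IH [M hM hMt]].
  exists a.1.1; last by rewrite /= /keyed eqxx.
  by move=> l; rewrite inE => /eqP ->.
case: (leP a.1.1 M) => haM.
  exists M; last by rewrite /= hMt orbT.
  by move=> l; rewrite inE => /orP [/eqP -> | /hM].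
exists a.1.1; last by rewrite /= /keyed eqxx.
by move=> l; rewrite inE => /orP [/eqP -> // | /hM h]; exact: le_trans h (ltW haM).
Qed.

Lemma below_peak_unkeyed M (x l : letter) :
  (x.1.1 <= M)%O -> (l.1.1 < x.1.1)%O -> ~~ keyed M l.
Proof. by move=> hxM hl; apply/negP => /eqP e; move: (lt_le_trans hl hxM); rewrite e ltxx. Qed.

Definition peak_at (u : seq letter) (x : letter) (v : seq letter) : Prop :=
  (u = [::] \/ ((last x u).1.1 < x.1.1)%O) /\ (v = [::] \/ ((head x v).1.1 < x.1.1)%O).

Lemma sorted_apart_peak M u x v :
  sorted key_change u -> sorted key_change v -> peak_at u x v -> (x.1.1 <= M)%O ->
  sorted (apart M) (u ++ x :: v) /\ sorted (apart M) (u ++ v).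
Proof.
move=> su sv [hu hv] hxM.
have kc_apart : subrel key_change (apart M).
  move=> a b hab; apply/negP => /andP [/eqP ha /eqP hb].
  by rewrite /key_change ha hb eqxx in hab.
have nM := below_peak_unkeyed hxM.
have {}su := sub_sorted kc_apart su; have {}sv := sub_sorted kc_apart sv.
have apart_l a b : ~~ keyed M a -> apart M a b by rewrite /apart => /negbTE ->.
have apart_r a b : ~~ keyed M b -> apart M a b by rewrite /apart andbC => /negbTE ->.
have su_x : sorted (apart M) (rcons u x).
  case: hu => [-> // | hl]; case: u su hl => [|y t] //= h1 hl.
  by rewrite rcons_path h1 apart_l ?nM.
have sx_v : path (apart M) x v.
  case: hv => [-> // | hl]; case: v sv hl => [|z t] //= h1 hl.
  by rewrite h1 apart_r ?nM.
split; first by rewrite sorted_cat_cons su_x sx_v.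
clear su_x sx_v; case: hu => [-> // | hl]; case: hv => [-> | hl']; first by rewrite cats0.
case: u su hl => [|y t] //= h1 hl; rewrite cat_path h1.
by case: v sv hl' => [|z t'] //= h2 hl'; rewrite h2 apart_l ?nM.
Qed.

Lemma size_filter_lt (T : Type) (p : pred T) (t : seq T) :
  has p t -> (size [seq l <- t | ~~ p l] < size t)%N.
Proof.
elim: t => //= a t IH; case: (p a) => /= h.
  by rewrite ltnS size_filter count_size.
by rewrite ltnS IH.
Qed.

Lemma peak_filter M u x v : (x.1.1 <= M)%O -> peak_at u x v ->
  peak_at [seq l <- u | ~~ keyed M l] x [seq l <- v | ~~ keyed M l].
Proof.
move=> hxM [hu hv].
have nM := below_peak_unkeyed hxM.
split.
  case: hu => [-> | hl]; [by left | right]; case/lastP: u hl => [|u y] /=; first by rewrite ltxx.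
  by rewrite last_rcons filter_rcons => hl; rewrite nM // last_rcons.
case: hv => [-> | hl]; [by left | right]; case: v hl => [|z t] /=; first by rewrite ltxx.
by move=> hl; rewrite nM.
Qed.

Lemma phiw_peak_step n s u x v :
  (forall u1 x1 v1, (size (u1 ++ x1 :: v1) <= n)%N -> on_side s (u1 ++ x1 :: v1) ->
     peak_at u1 x1 v1 -> phiW (u1 ++ x1 :: v1) = phi x1.2 * phiW (u1 ++ v1)) ->
  (size (u ++ x :: v) <= n.+1)%N -> on_side s (u ++ x :: v) ->
  sorted key_change u -> sorted key_change v -> peak_at u x v ->
  phiW (u ++ x :: v) = phi x.2 * phiW (u ++ v).
Proof.
move=> IH hs hw su sv hpk.
have [M hM hMw] := exists_max_key (cat_cons_neq0 u v x).
have hxM : (x.1.1 <= M)%O by apply: hM; rewrite mem_cat_cons eqxx.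
have [sep1 sep2] := sorted_apart_peak su sv hpk hxM.
have sub_uv : {subset u ++ v <= u ++ x :: v} by move=> l hl; rewrite mem_cat_cons hl orbT.
rewrite (phiw_factor_top hw hM sep1).
rewrite (phiw_factor_top (fun l hl => hw l (sub_uv l hl)) (fun l hl => hM l (sub_uv l hl)) sep2).
rewrite !filter_cat !big_cat big_cons /=.
case hxm: (keyed M x) => /=; first by ring.
rewrite IH; first by ring.
- have := size_filter_lt hMw; rewrite filter_cat /= hxm => h.
  by rewrite -ltnS (leq_trans h hs).
- move=> l; rewrite mem_cat_cons mem_cat !mem_filter.
  by case/or3P => [/eqP -> | /andP [_ hl] | /andP [_ hl]]; apply: hw;
    rewrite mem_cat_cons ?eqxx // mem_cat hl ?orbT.
- exact: peak_filter.
Qed.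

Lemma phiw_peak n s u x v :
  (size (u ++ x :: v) <= n)%N -> on_side s (u ++ x :: v) -> peak_at u x v ->
  phiW (u ++ x :: v) = phi x.2 * phiW (u ++ v).
Proof.
elim: n u x v => [|n IHn] u x v; first by rewrite size_cat addnS.
move=> hs hw [hu hv].
have on_u : on_side s u by move=> l hl; apply: hw; rewrite mem_cat hl.
have on_v : on_side s v by move=> l hl; apply: hw; rewrite mem_cat_cons mem_cat hl !orbT.
have [u' [hu1 hu2 hu3 hu4 hu5]] := merge_equal_keys on_u.
have [v' [hv1 hv2 hv3 hv4 hv5]] := merge_equal_keys on_v.
have e1 : phiW (u' ++ x :: v') = phiW (u ++ x :: v).
  have := hu4 [::] (x :: v'); have := hv4 (rcons u x) [::].
  by rewrite /= !cats0 !cat_rcons => <- ->.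
have e2 : phiW (u' ++ v') = phiW (u ++ v).
  by have := hu4 [::] v'; have := hv4 u [::]; rewrite /= !cats0 => <- ->.
have hpk : peak_at u' x v'.
  split.
    case: hu => [u0 | hl]; [left | right; by have [-> _] := hu5 x].
    by move: hu3; rewrite u0 leqn0 => /nilP.
  case: hv => [v0 | hl]; [left | right; by have [_ ->] := hv5 x].
  by move: hv3; rewrite v0 leqn0 => /nilP.
rewrite -e1 -e2; apply: (phiw_peak_step IHn) => //.
  by move: hs; rewrite !size_cat /= => /(leq_trans _); apply; rewrite leq_add ?ltnS.
by move=> l; rewrite mem_cat_cons mem_cat => /or3P [/eqP -> | /hu1 | /hv1] //;
  apply: hw; rewrite mem_cat_cons eqxx.
Qed.

Lemma mono_indep_side s : mono_indep mul phi (fun x y : K => (x < y)%O) (fun k => Asub k s).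
Proof.
move=> n p c kk hp hC hl hr.
pose l i : letter := (kk i, s, c i).
have en : iota 0 n = iota 0 p ++ p :: iota p.+1 (n - p.+1).
  by rewrite -{1}(subnKC (ltnW hp)) iotaD add0n -(subnSK hp).
have lhs : phil mul phi [seq c i | i <- iota 0 n] = phiW (map l (iota 0 n)).
  by rewrite /phiw -map_comp.
have rhs : phil mul phi [seq c i | i <- iota 0 n & i != p] =
           phiW (map l (iota 0 p) ++ map l (iota p.+1 (n - p.+1))).
  rewrite /phiw -map_cat -map_comp; congr (phil mul phi (map c _)).
  rewrite en filter_cat /= eqxx /=; congr (_ ++ _); apply/all_filterP/allP => i.
    by rewrite mem_iota add0n => /andP [_ h]; rewrite neq_ltn h.
  by rewrite mem_iota => /andP [h _]; rewrite neq_ltn h orbT.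
rewrite lhs rhs en map_cat /=; apply: (phiw_peak (s := s) (leqnn _)).
  move=> x; rewrite -map_cons -map_cat -en => /mapP [i].
  by rewrite mem_iota add0n => /andP [_ hi] ->; split=> //; exact: hC.
split.
  case: p hp hl hr {en lhs rhs} => [|p] hp hl hr; [by left | right].
  by rewrite -addn1 iotaD map_cat last_cat /= add0n addn1; exact: hl.
case: (ltnP p.+1 n) => h; first by right; rewrite -(subnSK h) /=; exact: hr.
by left; have -> : (n - p.+1 = 0)%N by apply/eqP; rewrite subn_eq0.
Qed.

Lemma sort_filter_iota n (P : pred nat) :
  sort leq [seq i <- iota 0 n | P i] = [seq i <- iota 0 n | P i].
Proof. by rewrite sorted_sort ?sorted_filter ?iota_sorted //; exact: leq_trans. Qed.

Lemma filter_nth_iota (T : Type) (x0 : T) (w : seq T) (P : pred T) :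
  map (nth x0 w) [seq i <- iota 0 (size w) | P (nth x0 w i)] = filter P w.
Proof. by rewrite -filter_map; congr (filter _ _); exact: mkseq_nth. Qed.

Definition two_key_items (M m : K) (c : bool) (w : seq item) : Prop :=
  {in w, forall x, x.1.1 \in [:: (M, c); (m, ~~ c)] /\ Asub x.1.1.1 x.1.1.2 x.1.2} /\
  {in w, forall x, ~~ keyed M x.1 -> x.2 = 0}.

Lemma two_key_items_centred_eq0 M m c G Psi (w : seq item) :
  m != M -> cbf_with_top [:: m] M G Psi -> two_key_items M m c w ->
  has (fun x => keyed M x.1) w -> ev_shifted G [seq x <- w | keyed M x.1] = 0 ->
  ev_shifted G w = 0.
Proof.
move=> hmM cbf [hw hw0] hhas htop.
pose x0 : item := ((M, c, 0), 0).
apply: (cbf_shifted_eq0 (x0 := x0) cbf) => // [x /hw [hk hA] | W].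
  by split=> //; move: hk; rewrite !inE => /orP [] /eqP -> /=; rewrite eqxx ?orbT.
set n := size w; set chi := fun i => _; set om := fun i => keyed M _.
have chi_om i : (i < n)%N -> chi i = (om i == c).
  move=> /(@mem_nth _ x0) /hw [hk _]; move: hk; rewrite /chi /om /keyed !inE.
  by case/orP => /eqP -> /=; rewrite ?eqxx // (negbTE hmM); case: (c).
have om_top : [seq nth x0 w i | i <- [seq i <- iota 0 n | om i]] = [seq x <- w | keyed M x.1].
  exact: filter_nth_iota.
set S1 := [seq i <- iota 0 n | chi i]; set S2 := [seq i <- iota 0 n | ~~ chi i].
have omS1 i : i \in S1 -> om i = c.
  by rewrite mem_filter mem_iota => /andP [hc /andP [_ hi]]; move: hc; rewrite chi_om // => /eqP.
have omS2 i : i \in rev S2 -> om i = ~~ c.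
  rewrite mem_rev mem_filter mem_iota => /andP [hc /andP [_ hi]].
  by move: hc; rewrite chi_om //; case: (om i); case: (c).
rewrite /blocks -/S1 -/S2 (runs_cat_const omS1 omS2) mem_filter !inE.
move=> /andP [nW /orP [] /eqP eW] hom; subst W.
all: rewrite -htop -om_top; congr (ev_shifted G (map _ _)).
  have hc : c by rewrite -(omS1 _ (head_in 0%N nW)).
  rewrite sort_filter_iota; apply: eq_in_filter => i; rewrite mem_iota => /andP [_ hi].
  by rewrite chi_om // hc eqb_id.
have hc : ~~ c by rewrite -(omS2 _ (head_in 0%N nW)).
have -> : sort leq (rev S2) = sort leq S2.
  by apply/perm_sortP; [exact: leq_total | exact: leq_trans | exact: anti_leq | rewrite perm_rev].
rewrite sort_filter_iota; apply: eq_in_filter => i; rewrite mem_iota => /andP [_ hi].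
by rewrite chi_om // (negbTE hc) eqbF_neg negbK.
Qed.

Lemma ev_shifted_two_key_items M m c G Psi (w : seq item) :
  m != M -> cbf_with_top [:: m] M G Psi -> two_key_items M m c w ->
  ev_shifted G w =
  G [seq x.1 | x <- w & ~~ keyed M x.1] * ev_shifted G [seq x <- w | keyed M x.1].
Proof.
move=> hmM cbf; have [[hG0 _] _ _ _] := cbf.
apply: (affine_agreement (top := keyed M) (adm := two_key_items M m c) (f := ev_shifted G)
  (g := fun w => G [seq x.1 | x <- w & ~~ keyed M x.1] * ev_shifted G [seq x <- w | keyed M x.1])).
- exact: ev_shifted_affine.
- move=> u v l a a' ht; rewrite !filter_cat /= ht /= (ev_shifted_affine _ _ _ l a a'); ring.
- move=> u v l a [hw hw0] _; split=> y hy; [apply: hw | apply: hw0];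
    by rewrite mem_cat_cons hy orbT.
- move=> u v l a a' [hw hw0] ht; split=> y; rewrite mem_cat_cons => /orP [/eqP -> | hy].
  + by apply: (hw (l, a)); rewrite mem_cat_cons eqxx.
  + by apply: hw; rewrite mem_cat_cons hy orbT.
  + by rewrite /= ht.
  + by apply: hw0; rewrite mem_cat_cons hy orbT.
- by move=> u v l a [_ hw0] ht; apply: (hw0 (l, a)); rewrite ?mem_cat_cons ?eqxx.
- move=> w0 [_ hw0] hn; have hb x : x \in w0 -> ~~ keyed M x.1.
    by move=> xw; apply: contra hn => hm; apply/hasP; exists x.
  rewrite ev_shifted0 => [|x xw]; last by apply: hw0 => //; apply: hb.
  rewrite (_ : [seq x <- w0 | keyed M x.1] = [::]); last first.
    by apply/eqP; rewrite -size_eq0 size_filter eqn0Ngt -has_count.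
  rewrite ev_shifted_nil // mulr1; congr G; congr map; apply/esym/all_filterP.
  by apply/allP.
- move=> w0 [hw hw0] hn.
  have [w' [ef e2 e3]] := exists_centring_shifts (ev_shifted_nil hG0) hn.
  have ok' : two_key_items M m c w'.
    split=> [y yw | y yw hy]; last by apply: hw0 => //; apply: e2.
    have : y.1 \in map fst w0 by rewrite -ef; apply: map_f.
    by case/mapP => z zw ->; exact: hw.
  exists w' => //; split=> //; rewrite e3 mulr0.
  apply: (two_key_items_centred_eq0 hmM cbf ok') => //.
  by rewrite -(has_map fst (keyed M)) ef has_map.
Qed.

Lemma classical_indep_two_keys M m c n (x : nat -> V) (top : nat -> bool) :
  (m < M)%O -> (forall i, (i < n)%N -> if top i then Asub M c (x i) else Asub m (~~ c) (x i)) ->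
  phil mul phi [seq x i | i <- iota 0 n] =
  phil mul phi [seq x i | i <- iota 0 n & ~~ top i] *
  phil mul phi [seq x i | i <- iota 0 n & top i].
Proof.
move=> hmM hx; have nmM : m != M by rewrite lt_eqF.
have sTM : sorted <%O (rcons [:: m] M) by rewrite /= hmM.
have [G [Psi [cbf hG]]] := bm_indep_top (isT : [:: m] != [::]) sTM.
pose l i : letter := if top i then (M, c, x i) else (m, ~~ c, x i).
have keyed_l i : keyed M (l i) = top i.
  by rewrite /l /keyed; case: (top i); rewrite /= ?eqxx // (negbTE nmM).
pose w0 := [seq (l i, 0 : F) | i <- iota 0 n].
have ok0 : two_key_items M m c w0.
  split=> [y | y]; move=> /mapP [i]; rewrite mem_iota add0n => /andP [_ hi] -> //.
  by have := hx i hi; rewrite /l; case: (top i); rewrite !inE eqxx ?orbT.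
have phiw_l t : {subset t <= iota 0 n} -> G (map l t) = phil mul phi (map x t).
  move=> st; rewrite hG /phiw -?map_comp; last first.
    move=> y /mapP [i /st]; rewrite mem_iota add0n => /andP [_ hi] ->.
    by have := hx i hi; rewrite /l; case: (top i); rewrite !inE eqxx ?orbT.
  by congr (phil mul phi _); apply: eq_map => i; rewrite /l /=; case: (top i).
have := ev_shifted_two_key_items nmM cbf ok0.
rewrite !ev_shifted0 => [|y | y]; last 2 first.
- by rewrite mem_filter => /andP [_ /mapP [i _ ->]].
- by move=> /mapP [i _ ->].
have hfl (P : pred letter) : [seq y.1 | y <- w0 & P y.1] = map l [seq i <- iota 0 n | P (l i)].
  by rewrite /w0 filter_map -map_comp.
have f1 : [seq i <- iota 0 n | ~~ keyed M (l i)] = [seq i <- iota 0 n | ~~ top i].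
  by apply: eq_filter => i; rewrite keyed_l.
have f2 : [seq i <- iota 0 n | keyed M (l i)] = [seq i <- iota 0 n | top i].
  by apply: eq_filter => i; rewrite keyed_l.
have e0 : map fst w0 = map l (iota 0 n) by rewrite /w0 -map_comp.
rewrite e0 (hfl (fun y => ~~ keyed M y)) (hfl (keyed M)) f1 f2.
by rewrite !phiw_l // => i; rewrite mem_filter => /andP [].
Qed.

Lemma classical_indep_pair j k : j != k -> classical_indep mul phi (Asub k true) (Asub j false).
Proof.
move=> hjk n x inL _ hx; case: (ltgtP k j) => hkj.
- rewrite (classical_indep_two_keys (c := false) (top := fun i => ~~ inL i) hkj) => [|i /hx].
    by congr (phil _ _ (map _ _) * _); apply: eq_filter => i; rewrite negbK.
  by case: (inL i).
- by rewrite mulrC (classical_indep_two_keys (c := true) (top := inL) hkj).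
- by rewrite hkj eqxx in hjk.
Qed.

End BiMonotone.

Theorem mainTheorem4 (F : fieldType) (V : lmodType F) (mul : V -> V -> V)
  (phi : V -> F) (d : Order.disp_t) (K : orderType d)
  (Asub : K -> bool -> V -> Prop) :
  nc_space mul phi ->
  (forall k s, subalg mul (Asub k s)) ->
  bm_indep mul phi Asub ->
  [/\ mono_indep mul phi (fun x y : K => (x < y)%O) (fun k => Asub k true),
      mono_indep mul phi (fun x y : K => (x < y)%O) (fun k => Asub k false) &
      forall j k : K, j != k -> classical_indep mul phi (Asub k true) (Asub j false)].
Proof.
move=> [mulA _ _ _ _] hsub bmi.
have Asub_mul k s x y : Asub k s x -> Asub k s y -> Asub k s (mul x y).
  by have [_ _ _ hmul] := hsub k s; exact: hmul.
split; [exact: mono_indep_side | exact: mono_indep_side | exact: classical_indep_pair].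
Qed.
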